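(* Let $m,n\in\mathbb{N}$ be coprime with $1\le m\le n-1$, and let $\Gamma$ be a $\mathbb{D}_n$-symmetric billiard curve with equivariant parametrization $\gamma$. An $n$-periodic billiard sequence $Z\in\Gamma^{\mathbb{Z}}$ of rotation number $\frac mn$ is $\mathbb{D}_n$-symmetric if and only if it has a lift of the form $$X_i=\frac{A}{2n}+\frac mn i\quad\text{for some }A\in\mathbb{Z}.$$ Every such sequence is a billiard orbit. Two such orbits are geometrically equal if and only if their lifts of this form differ by an integer multiple of $\frac1n$. In particular, $\Gamma$ has exactly two geometrically distinct $n$-periodic $\mathbb{D}_n$-symmetric Birkhoff billiard orbits of rotation number $\frac mn$.
   Context: $\mathbb{D}_n=\langle R,S\rangle$, where $R$ is counterclockwise rotation by $2\pi/n$ and $S$ is the horizontal reflection. $\Gamma$ is a $C^2$ simple closed $\mathbb{D}_n$-invariant curve bounding a strictly convex domain, parametrized counterclockwise by a $1$-periodic $C^2$ immersion $\gamma$ descending to an embedding of $\mathbb{R}/\mathbb{Z}$, with $\gamma(x+1/n)=R\gamma(x)$ and $\gamma(-x)=S\gamma(x)$. A billiard sequence has $Z_i\ne Z_{i+1}$, with lift $X$ ($\gamma(X_i)=Z_i$, $0<X_{i+1}-X_i<1$). A billiard orbit satisfies the reflection law at each point. $Z$ is $\mathbb{D}_n$-symmetric if every $g\in\mathbb{D}_n$ satisfies, for some $k$, $g(Z_i)=Z_{k+i}$ for all $i$ or $g(Z_i)=Z_{k-i}$ for all $i$. Birkhoff means the lift satisfies $X_i\le X_j+l\Rightarrow X_{i+m}\le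 X_{j+m}+l$ for all integers. $Z,Z'$ are geometrically equal if for some $k$, $Z_i=Z'_{k+i}$ for all $i$ or $Z_i=Z'_{k-i}$ for all $i$; otherwise they are geometrically distinct. *)

From Stdlib Require Import Reals ZArith Arith.
From Coquelicot Require Import Coquelicot.
Open Scope R_scope.

Definition pt := (R * R)%type.

Definition padd (p q : pt) : pt := (fst p + fst q, snd p + snd q).
Definition psub (p q : pt) : pt := (fst p - fst q, snd p - snd q).
Definition pscal (s : R) (p : pt) : pt := (s * fst p, s * snd p).
Definition pdot (p q : pt) : R := fst p * fst q + snd p * snd q.
Definition pnorm (p : pt) : R := sqrt (fst p * fst p + snd p * snd p).
Definition pdist (p q : pt) : R := pnorm (psub p q).
Definition pJ (p : pt) : pt := (- snd p, fst p).

Definition rot (th : R) (p : pt) : pt :=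
  (cos th * fst p - sin th * snd p, sin th * fst p + cos th * snd p).
Definition Rn (n : nat) : pt -> pt := rot (2 * PI / INR n).
Definition Sref (p : pt) : pt := (fst p, - snd p).

(* D_n = <R, S>: the set of maps generated by R and S under composition
   (R^n = S^2 = id, so the generated monoid is the generated group). *)
Inductive in_Dn (n : nat) : (pt -> pt) -> Prop :=
| Dn_id : in_Dn n (fun p => p)
| Dn_R : forall g, in_Dn n g -> in_Dn n (fun p => Rn n (g p))
| Dn_S : forall g, in_Dn n g -> in_Dn n (fun p => Sref (g p)).

Definition interior (K : pt -> Prop) (p : pt) : Prop :=
  exists eps, 0 < eps /\ forall q, pdist p q < eps -> K q.
Definition closure (K : pt -> Prop) (p : pt) : Prop :=
  forall eps, 0 < eps -> exists q, K q /\ pdist p q < eps.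
Definition boundary (K : pt -> Prop) (p : pt) : Prop :=
  closure K p /\ ~ interior K p.

Definition gx (g : R -> pt) (x : R) : R := fst (g x).
Definition gy (g : R -> pt) (x : R) : R := snd (g x).

Definition C2 (f : R -> R) : Prop :=
  (forall x, ex_derive f x) /\
  (forall x, ex_derive (Derive f) x) /\
  (forall x, continuous (Derive (Derive f)) x).

Definition dgamma (g : R -> pt) (x : R) : pt :=
  (Derive (gx g) x, Derive (gy g) x).

(* Gamma = image of g bounds a strictly convex (open, bounded) domain Omega,
   and g runs counterclockwise (Omega lies to the left of the velocity). *)
Definition bounds_strictly_convex_ccw (g : R -> pt) : Prop :=
  exists Omega : pt -> Prop,
    (forall p, Omega p -> interior Omega p) /\
    (exists M, forall p, Omega p -> pnorm p <= M) /\
    (forall p, boundary Omega p <-> exists x, g x = p) /\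
    (forall p q t, closure Omega p -> closure Omega q -> p <> q ->
        0 < t < 1 -> Omega (padd (pscal (1 - t) p) (pscal t q))) /\
    (forall x, exists eps, 0 < eps /\
        forall s, 0 < s < eps -> Omega (padd (g x) (pscal s (pJ (dgamma g x))))).

Definition Dn_billiard_curve (n : nat) (g : R -> pt) : Prop :=
  C2 (gx g) /\ C2 (gy g) /\
  (forall x, dgamma g x <> (0, 0)) /\
  (* 1-periodic and descends to an embedding of R/Z *)
  (forall x y, g x = g y <-> exists k : Z, x - y = IZR k) /\
  bounds_strictly_convex_ccw g /\
  (forall x, g (x + / INR n) = Rn n (g x)) /\
  (forall x, g (- x) = Sref (g x)).

Definition on_curve (g : R -> pt) (p : pt) : Prop := exists x, g x = p.

Definition billiard_seq (g : R -> pt) (Zs : Z -> pt) : Prop :=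
  (forall i, on_curve g (Zs i)) /\ (forall i, Zs i <> Zs (i + 1)%Z).

Definition is_lift (g : R -> pt) (Zs : Z -> pt) (X : Z -> R) : Prop :=
  forall i, g (X i) = Zs i /\ 0 < X (i + 1)%Z - X i < 1.

Definition unitv (p : pt) : pt := pscal (/ pnorm p) p.

(* reflection law at every point: the unit vectors towards the previous and
   next points make equal angles with the tangent line *)
Definition billiard_orbit (g : R -> pt) (Zs : Z -> pt) : Prop :=
  billiard_seq g Zs /\
  forall i x, g x = Zs i ->
    pdot (padd (unitv (psub (Zs (i - 1)%Z) (Zs i)))
               (unitv (psub (Zs (i + 1)%Z) (Zs i))))
         (dgamma g x) = 0.

Definition n_periodic (n : nat) (Zs : Z -> pt) : Prop :=
  forall i, Zs (i + Z.of_nat n)%Z = Zs i.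

Definition rotation_number (g : R -> pt) (Zs : Z -> pt) (rho : R) : Prop :=
  exists X, is_lift g Zs X /\
    is_lim_seq (fun k : nat => X (Z.of_nat k) / INR k) rho.

Definition Dn_symmetric (n : nat) (Zs : Z -> pt) : Prop :=
  forall g, in_Dn n g -> exists k : Z,
    (forall i, g (Zs i) = Zs (k + i)%Z) \/ (forall i, g (Zs i) = Zs (k - i)%Z).

Definition Birkhoff (g : R -> pt) (Zs : Z -> pt) : Prop :=
  exists X, is_lift g Zs X /\
    forall i j m l : Z, X i <= X j + IZR l -> X (i + m)%Z <= X (j + m)%Z + IZR l.

Definition geom_equal (Zs Zs' : Z -> pt) : Prop :=
  exists k : Z, (forall i, Zs i = Zs' (k + i)%Z) \/ (forall i, Zs i = Zs' (k - i)%Z).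

Definition sym_lift (n m : nat) (A : Z) : Z -> R :=
  fun i => IZR A / (2 * INR n) + INR m / INR n * IZR i.

Definition nm_seq (g : R -> pt) (n m : nat) (Zs : Z -> pt) : Prop :=
  billiard_seq g Zs /\ n_periodic n Zs /\ rotation_number g Zs (INR m / INR n).

(* If a D_n-symmetric sequence has lift X, the rotation R maps Z_i to Z_{k+i} or Z_{k-i}; the
   second case forces n = 2, and in both cases X advances by the constant step m/n.  The
   reflection S then puts X_0 on the grid Z/(2n), i.e. X_i = A/(2n) + (m/n) i.  Conversely, with
   u m + v n = 1 (Bezout), R shifts such a sequence by u and S reverses it.  Every point
   gamma(X_i) lies on a mirror axis of D_n, and that mirror swaps Z_{i-1} and Z_{i+1} and
   reverses the tangent at Z_i, which is the reflection law.  Two such sequences coincide up to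
   shift and reversal iff their offsets A have the same parity, hence exactly two orbits. *)

From Pilot Require Import Defs.
From Stdlib Require Import Reals ZArith Arith Lia Lra.
From Coquelicot Require Import Coquelicot.
Open Scope R_scope.

Definition is_int (r : R) : Prop := exists k : Z, r = IZR k.

Lemma is_int_sub r s : is_int r -> is_int s -> is_int (r - s).
Proof. intros [a ->] [b ->]; exists (a - b)%Z; rewrite minus_IZR; reflexivity. Qed.

Lemma is_int_small_eq0 r : is_int r -> -1 < r < 1 -> r = 0.
Proof.
  intros [k ->] [lo hi].
  apply lt_IZR in lo; apply lt_IZR in hi.
  replace k with 0%Z by lia; reflexivity.
Qed.

Lemma Z_step_invariant (f : Z -> R) :
  (forall i, f (i + 1)%Z = f i) -> forall i, f i = f 0%Z.
Proof.
  intros hf i; induction i using Z.peano_ind.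
  - reflexivity.
  - rewrite <- Z.add_1_r, hf; exact IHi.
  - rewrite <- IHi, <- (hf (Z.pred i)); f_equal; lia.
Qed.

Lemma int_valued_const (f : Z -> R) :
  (forall i, is_int (f i)) -> (forall i, -1 < f (i + 1)%Z - f i < 1) ->
  forall i, f i = f 0%Z.
Proof.
  intros hint hslow; apply Z_step_invariant; intro i.
  apply Rminus_diag_uniq, is_int_small_eq0; [apply is_int_sub | apply hslow]; apply hint.
Qed.

Lemma translation_iter (X : Z -> R) (s : Z) (c : R) :
  (forall i, X (i + s)%Z = X i + c) -> forall j i, X (i + j * s)%Z = X i + IZR j * c.
Proof.
  intros hX j; induction j using Z.peano_ind; intro i.
  - rewrite Z.mul_0_l, Z.add_0_r; simpl; ring.
  - rewrite Z.mul_succ_l, Z.add_assoc, hX, IHj, succ_IZR; ring.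
  - specialize (hX (i + Z.pred j * s)%Z).
    rewrite <- Z.add_assoc, <- Z.mul_succ_l, Z.succ_pred, IHj in hX.
    replace (IZR (Z.pred j)) with (IZR j - 1) by (rewrite <- Z.sub_1_r, minus_IZR; ring).
    lra.
Qed.

Lemma is_lim_seq_affine_div (a b : R) :
  is_lim_seq (fun k => (a + b * INR k) / INR k) b.
Proof.
  apply (is_lim_seq_ext_loc (fun k => a * / INR k + b)).
  - exists 1%nat; intros k hk.
    field; apply not_0_INR; lia.
  - assert (hinv : is_lim_seq (fun k => / INR k) 0).
    { apply (is_lim_seq_inv _ p_infty); [apply is_lim_seq_INR | discriminate]. }
    assert (h := is_lim_seq_plus' _ _ _ _ (is_lim_seq_scal_l _ a _ hinv) (is_lim_seq_const b)).
    rewrite Rmult_0_r, Rplus_0_l in h; exact h.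
Qed.

Lemma INR_neq0 (n : nat) : (1 <= n)%nat -> INR n <> 0.
Proof. intro hn; apply not_0_INR; lia. Qed.

Lemma nat_coprime_bezout (m n : nat) : (1 <= m)%nat -> Nat.gcd m n = 1%nat ->
  exists u v : Z, (u * Z.of_nat m + v * Z.of_nat n = 1)%Z.
Proof.
  intros hm hgcd.
  destruct (Nat.gcd_bezout_pos m n ltac:(lia)) as [a [b h]].
  rewrite hgcd in h; exists (Z.of_nat a), (- Z.of_nat b)%Z; nia.
Qed.

Lemma lift_period (g : R -> pt) (n : nat) (Zs : Z -> pt) (X : Z -> R) :
  (forall x y, g x = g y <-> is_int (x - y)) ->
  is_lift g Zs X -> n_periodic n Zs ->
  exists p : Z, forall i, X (i + Z.of_nat n)%Z = X i + IZR p.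
Proof.
  intros g_fiber hX hper.
  set (f i := X (i + Z.of_nat n)%Z - X i).
  assert (f_int : forall i, is_int (f i)).
  { intro i; apply g_fiber.
    rewrite (proj1 (hX _)), (proj1 (hX i)); apply hper. }
  assert (f_slow : forall i, -1 < f (i + 1)%Z - f i < 1).
  { intro i; unfold f.
    rewrite <- Z.add_assoc, (Z.add_comm 1), Z.add_assoc.
    pose proof (proj2 (hX (i + Z.of_nat n)%Z)); pose proof (proj2 (hX i)); lra. }
  destruct (f_int 0%Z) as [p hp]; exists p; intro i.
  pose proof (int_valued_const f f_int f_slow i) as e; unfold f in e, hp.
  rewrite hp in e; lra.
Qed.

Lemma lift_period_rotation (n m : nat) (X : Z -> R) (p : Z) : (1 <= n)%nat ->
  (forall i, X (i + Z.of_nat n)%Z = X i + IZR p) ->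
  is_lim_seq (fun k : nat => X (Z.of_nat k) / INR k) (INR m / INR n) ->
  IZR p = INR m.
Proof.
  intros hn hper hrot.
  assert (hn0 := INR_neq0 n hn).
  assert (hsub : forall u : nat -> R, forall l : R, is_lim_seq u l ->
            is_lim_seq (fun k => u (k * n)%nat) l).
  { intros u l hu; apply (is_lim_seq_subseq u l (fun k => (k * n)%nat)); [|exact hu].
    apply eventually_subseq; intro k; simpl; lia. }
  assert (hX : forall k : nat, X (Z.of_nat (k * n)) = X 0%Z + IZR p / INR n * INR (k * n)).
  { intro k; rewrite Nat2Z.inj_mul, mult_INR.
    pose proof (translation_iter X _ _ hper (Z.of_nat k) 0%Z) as e; simpl in e.
    rewrite e, <- INR_IZR_INZ; field; exact hn0. }
  assert (hl1 := hsub _ _ hrot); cbv beta in hl1.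
  assert (hl2 : is_lim_seq (fun k => X (Z.of_nat (k * n)) / INR (k * n)) (IZR p / INR n)).
  { apply (is_lim_seq_ext (fun k => (X 0%Z + IZR p / INR n * INR (k * n)) / INR (k * n))).
    - intro k; rewrite hX; reflexivity.
    - exact (hsub _ _ (is_lim_seq_affine_div _ _)). }
  assert (e := is_lim_seq_unique _ _ hl1); rewrite (is_lim_seq_unique _ _ hl2) in e.
  injection e as e.
  apply (Rmult_eq_reg_r (/ INR n)); [exact e | apply Rinv_neq_0_compat, hn0].
Qed.

Lemma lift_step_of_shift (n m : nat) (X : Z -> R) (k : Z) : (1 <= n)%nat ->
  (forall i, 0 < X (i + 1)%Z - X i < 1) ->
  (forall i, X (i + Z.of_nat n)%Z = X i + INR m) ->
  (forall i, is_int (X (k + i)%Z - X i - / INR n)) ->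
  forall i, X (i + 1)%Z = X i + INR m / INR n.
Proof.
  intros hn hstep hper hshift.
  assert (hn0 := INR_neq0 n hn).
  set (e i := X (k + i)%Z - X i - / INR n).
  assert (e_slow : forall i, -1 < e (i + 1)%Z - e i < 1).
  { intro i; unfold e; rewrite Z.add_assoc.
    pose proof (hstep (k + i)%Z); pose proof (hstep i); lra. }
  destruct (hshift 0%Z) as [E hE].
  assert (hk : forall i, X (i + k)%Z = X i + (IZR E + / INR n)).
  { intro i; pose proof (int_valued_const e hshift e_slow i) as h; unfold e in h, hE.
    rewrite Z.add_comm; lra. }
  assert (itk := translation_iter _ _ _ hk).
  assert (itn := translation_iter _ _ _ hper).
  (* [X (n k)] computed along both translations gives [n E + 1 = k m]. *)
  assert (hkm : (Z.of_nat n * E + 1 = k * Z.of_nat m)%Z).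
  { pose proof (itk (Z.of_nat n) 0%Z) as a; pose proof (itn k 0%Z) as b.
    rewrite Z.mul_comm, a, <- !INR_IZR_INZ in b.
    apply eq_IZR; rewrite plus_IZR, !mult_IZR, <- !INR_IZR_INZ.
    apply (Rplus_eq_reg_l (X 0%Z)); rewrite <- b; field; exact hn0. }
  intro i.
  pose proof (itk (Z.of_nat m) i) as a; pose proof (itn E (i + 1)%Z) as b.
  replace (i + Z.of_nat m * k)%Z with (i + 1 + E * Z.of_nat n)%Z in a by lia.
  rewrite a, <- INR_IZR_INZ in b.
  replace (INR m / INR n) with (INR m * (IZR E + / INR n) - IZR E * INR m) by (field; exact hn0).
  lra.
Qed.

Lemma reversal_shift_forces_n2 (n : nat) (X : Z -> R) (k : Z) : (2 <= n)%nat ->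
  (forall i, is_int (X (k - i)%Z - X i - / INR n)) -> n = 2%nat.
Proof.
  intros hn hrev.
  assert (hnR : 2 <= INR n) by (apply (le_INR 2); exact hn).
  assert (hint : is_int (2 / INR n)).
  { destruct (hrev 0%Z) as [a ha]; destruct (hrev k) as [b hb].
    rewrite Z.sub_0_r in ha; rewrite Z.sub_diag in hb.
    exists (- (a + b))%Z; rewrite opp_IZR, plus_IZR, <- ha, <- hb; field; lra. }
  assert (hbound : 0 < 2 / INR n <= 1).
  { split; [apply Rdiv_lt_0_compat; lra|].
    apply (Rmult_le_reg_r (INR n)); [lra|]; field_simplify; lra. }
  destruct hint as [z hz]; rewrite hz in hbound.
  destruct hbound as [lo hi]; apply lt_IZR in lo; apply le_IZR in hi.
  replace z with 1%Z in hz by lia.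
  apply INR_eq; simpl.
  apply (Rmult_eq_reg_r (/ INR n)); [|apply Rinv_neq_0_compat; lra].
  rewrite Rinv_r by lra; unfold Rdiv in hz; lra.
Qed.

Lemma lift_step_of_reversal (X : Z -> R) (k : Z) :
  (forall i, 0 < X (i + 1)%Z - X i < 1) ->
  (forall i, X (i + 2)%Z = X i + 1) ->
  (forall i, is_int (X (k - i)%Z - X i - / 2)) ->
  forall i, X (i + 1)%Z = X i + / 2.
Proof.
  intros hstep hper hrev i.
  assert (it := translation_iter _ _ _ hper).
  destruct (hrev i) as [z hz].
  destruct (Z.Even_or_Odd (k - 2 * i)) as [[t ht]|[t ht]].
  - exfalso.
    replace (k - i)%Z with (i + t * 2)%Z in hz by lia.
    rewrite it in hz.
    assert (e : IZR (2 * z) = IZR (2 * t - 1)).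
    { rewrite mult_IZR, minus_IZR, mult_IZR; lra. }
    apply eq_IZR in e; lia.
  - replace (k - i)%Z with (i + 1 + t * 2)%Z in hz by lia.
    rewrite it in hz.
    assert (h : X (i + 1)%Z - X i - / 2 = 0).
    { apply is_int_small_eq0; [exists (z - t)%Z; rewrite minus_IZR; lra|].
      pose proof (hstep i); lra. }
    lra.
Qed.

Lemma Derive_mirror (f : R -> R) (x : R) : ex_derive f x ->
  Derive (fun y => f (2 * x - y)) x = - Derive f x.
Proof.
  intro hf.
  assert (e : 2 * x - x = x) by ring.
  rewrite Derive_comp; [| rewrite e; exact hf | (auto_derive; trivial)].
  rewrite e.
  assert (d : is_derive (fun y => 2 * x - y) x (-1)) by (auto_derive; trivial; ring).
  rewrite (is_derive_unique (Rminus (2 * x)) x (-1) d); ring.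
Qed.

(* Reflection across the line through the origin at angle [th / 2]. *)
Definition line_reflection (th : R) (p : pt) : pt :=
  (cos th * fst p + sin th * snd p, sin th * fst p - cos th * snd p).

Lemma line_reflection_sub (th : R) (p q : pt) :
  psub (line_reflection th p) (line_reflection th q) = line_reflection th (psub p q).
Proof. unfold psub, line_reflection; simpl; f_equal; ring. Qed.

Lemma dgamma_mirror (g : R -> pt) (th x : R) :
  (forall y, ex_derive (gx g) y) -> (forall y, ex_derive (gy g) y) ->
  (forall y, g (2 * x - y) = line_reflection th (g y)) ->
  line_reflection th (dgamma g x) = pscal (-1) (dgamma g x).
Proof.
  intros dx dy hmirror.
  assert (ex : forall y, gx g (2 * x - y) = cos th * gx g y + sin th * gy g y)
    by (intro y; unfold gx, gy; rewrite hmirror; reflexivity).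
  assert (ey : forall y, gy g (2 * x - y) = sin th * gx g y - cos th * gy g y)
    by (intro y; unfold gx, gy; rewrite hmirror; reflexivity).
  assert (Dx := Derive_mirror _ x (dx x)); rewrite (Derive_ext _ _ x ex) in Dx.
  assert (Dy := Derive_mirror _ x (dy x)); rewrite (Derive_ext _ _ x ey) in Dy.
  rewrite Derive_plus, !Derive_scal in Dx by (apply ex_derive_scal; auto).
  rewrite Derive_minus, !Derive_scal in Dy by (apply ex_derive_scal; auto).
  unfold line_reflection, dgamma, pscal; simpl; f_equal; lra.
Qed.

Lemma unitv_line_reflection (th : R) (p : pt) :
  unitv (line_reflection th p) = line_reflection th (unitv p).
Proof.
  assert (hc := sin2_cos2 th); unfold Rsqr in hc.
  assert (hnorm : pnorm (line_reflection th p) = pnorm p).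
  { unfold pnorm, line_reflection; simpl; f_equal.
    transitivity ((sin th * sin th + cos th * cos th) * (fst p * fst p + snd p * snd p));
      [ring | rewrite hc; ring]. }
  unfold unitv; rewrite hnorm; unfold line_reflection, pscal; simpl; f_equal; ring.
Qed.

(* [line_reflection th] is self-adjoint, so [<u + L u, t> = <u, t + L t> = 0]. *)
Lemma reflection_law_of_mirror (th : R) (u t : pt) :
  line_reflection th t = pscal (-1) t ->
  pdot (padd (unitv u) (unitv (line_reflection th u))) t = 0.
Proof.
  rewrite unitv_line_reflection.
  destruct (unitv u) as [a b], t as [t1 t2].
  unfold line_reflection, pscal, pdot, padd; simpl; intro h; injection h as h1 h2.
  transitivity (a * (t1 + (cos th * t1 + sin th * t2)) + b * (t2 + (sin th * t1 - cos th * t2)));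
    [ring | rewrite h1, h2; ring].
Qed.

Section SymmetricCurve.

Variables (n : nat) (g : R -> pt).
Hypothesis n_ge2 : (2 <= n)%nat.
Hypothesis g_fiber : forall x y, g x = g y <-> is_int (x - y).
Hypothesis g_rot : forall x, g (x + / INR n) = Defs.Rn n (g x).
Hypothesis g_refl : forall x, g (- x) = Sref (g x).

Let n_neq0 : INR n <> 0.
Proof. apply INR_neq0; lia. Qed.

Lemma lift_rotation_is_int (Zs : Z -> pt) (X : Z -> R) (i j : Z) :
  is_lift g Zs X -> Defs.Rn n (Zs i) = Zs j -> is_int (X j - X i - / INR n).
Proof.
  intros hX h.
  replace (X j - X i - / INR n) with (X j - (X i + / INR n)) by ring.
  apply g_fiber; rewrite g_rot, (proj1 (hX i)), (proj1 (hX j)); symmetry; exact h.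
Qed.

Lemma symmetric_lift_step (m : nat) (Zs : Z -> pt) (X : Z -> R) :
  (1 <= m <= n - 1)%nat -> is_lift g Zs X ->
  (forall i, X (i + Z.of_nat n)%Z = X i + INR m) -> Dn_symmetric n Zs ->
  forall i, X (i + 1)%Z = X i + INR m / INR n.
Proof.
  intros hm hX hper hsym.
  assert (hstep : forall i, 0 < X (i + 1)%Z - X i < 1) by (intro i; apply hX).
  destruct (hsym _ (Dn_R n _ (Dn_id n))) as [k [hk|hk]].
  - apply (lift_step_of_shift n m X k); [lia | exact hstep | exact hper |].
    intro i; exact (lift_rotation_is_int Zs X i _ hX (hk i)).
  - assert (hrev : forall i, is_int (X (k - i)%Z - X i - / INR n))
      by (intro i; exact (lift_rotation_is_int Zs X i _ hX (hk i))).
    assert (n2 := reversal_shift_forces_n2 n X k n_ge2 hrev); subst n.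
    replace m with 1%nat in * by lia.
    change (INR 1) with 1 in *; change (Z.of_nat 2) with 2%Z in hper.
    replace (INR 2) with 2 in * by (simpl; ring).
    replace (1 / 2) with (/ 2) by field.
    apply (lift_step_of_reversal X k hstep); [intro i; rewrite hper; ring | exact hrev].
Qed.

Lemma symmetric_has_sym_lift (m : nat) (Zs : Z -> pt) :
  (1 <= m <= n - 1)%nat -> n_periodic n Zs -> rotation_number g Zs (INR m / INR n) ->
  Dn_symmetric n Zs -> exists A : Z, is_lift g Zs (sym_lift n m A).
Proof.
  intros hm hper [X [hX hrot]] hsym.
  destruct (lift_period g n Zs X g_fiber hX hper) as [p hp].
  rewrite (lift_period_rotation n m X p ltac:(lia) hp hrot) in hp.
  assert (hstep := symmetric_lift_step m Zs X hm hX hp hsym).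
  assert (affine : forall i, X i = X 0%Z + IZR i * (INR m / INR n)).
  { intro i; rewrite <- (translation_iter X 1 _ hstep i 0%Z), Z.mul_1_r; reflexivity. }
  assert (hS : exists k, g (- X 0%Z) = g (X k)).
  { destruct (hsym _ (Dn_S n _ (Dn_id n))) as [k [hk|hk]];
      [exists (k + 0)%Z | exists (k - 0)%Z];
      rewrite g_refl, (proj1 (hX 0%Z)), (proj1 (hX _)); apply hk. }
  destruct hS as [k hk]; apply g_fiber in hk; destruct hk as [J hJ].
  rewrite (affine k) in hJ.
  exists (- (J * Z.of_nat n + k * Z.of_nat m))%Z.
  assert (he : forall i, sym_lift n m (- (J * Z.of_nat n + k * Z.of_nat m)) i = X i).
  { intro i; unfold sym_lift; rewrite (affine i).
    rewrite opp_IZR, plus_IZR, !mult_IZR, <- !INR_IZR_INZ.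
    replace (X 0%Z) with (- (IZR J + IZR k * (INR m / INR n)) / 2) by lra.
    field; exact n_neq0. }
  intro i; rewrite !he; apply hX.
Qed.

Lemma mirror_formula (N : nat) (y : R) :
  g (INR N / INR n - y) = line_reflection (INR N * (2 * PI / INR n)) (g y).
Proof.
  revert y; induction N as [|N IH]; intro y.
  - change (INR 0) with 0.
    replace (0 / INR n - y) with (- y) by (field; exact n_neq0).
    rewrite g_refl, Rmult_0_l; unfold Sref, line_reflection; rewrite cos_0, sin_0.
    f_equal; ring.
  - replace (INR (S N) / INR n - y) with ((INR N / INR n - y) + / INR n)
      by (rewrite S_INR; field; exact n_neq0).
    rewrite g_rot, IH, S_INR, Rmult_plus_distr_r, Rmult_1_l.
    unfold Defs.Rn, rot, line_reflection; rewrite cos_plus, sin_plus; simpl; f_equal; ring.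
Qed.

Lemma mirror_through_grid_point (N : Z) :
  exists th, forall y, g (IZR N / INR n - y) = line_reflection th (g y).
Proof.
  assert (hn : (0 < Z.of_nat n)%Z) by lia.
  set (r := (N mod Z.of_nat n)%Z).
  assert (hr : (0 <= r)%Z) by (apply Z.mod_pos_bound; exact hn).
  exists (INR (Z.to_nat r) * (2 * PI / INR n)); intro y.
  rewrite <- mirror_formula; apply g_fiber; exists (N / Z.of_nat n)%Z.
  rewrite (INR_IZR_INZ (Z.to_nat r)), Z2Nat.id by exact hr.
  rewrite (Z.div_mod N (Z.of_nat n)) at 1 by lia; fold r.
  rewrite plus_IZR, mult_IZR, <- INR_IZR_INZ; field; exact n_neq0.
Qed.

Variable m : nat.

Lemma sym_lift_diff (A A' : Z) (i : Z) :
  sym_lift n m A i - sym_lift n m A' i = (IZR A - IZR A') / (2 * INR n).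
Proof. unfold sym_lift; field; exact n_neq0. Qed.

Lemma sym_lift_shift (A K u v j : Z) : (u * Z.of_nat m + v * Z.of_nat n = 1)%Z ->
  sym_lift n m A (j + K * u) = sym_lift n m A j + IZR K / INR n - IZR (K * v).
Proof.
  intro huv.
  assert (huvR : IZR u * INR m = 1 - IZR v * INR n).
  { rewrite !INR_IZR_INZ, <- !mult_IZR, <- minus_IZR; f_equal; lia. }
  unfold sym_lift; rewrite plus_IZR, !mult_IZR.
  replace (INR m / INR n * (IZR j + IZR K * IZR u))
    with (INR m / INR n * IZR j + IZR K * (IZR u * INR m) / INR n) by (field; exact n_neq0).
  rewrite huvR; field; exact n_neq0.
Qed.

Lemma sym_lift_billiard_orbit (A : Z) (Zs : Z -> pt) :
  (forall y, ex_derive (gx g) y) -> (forall y, ex_derive (gy g) y) ->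
  billiard_seq g Zs -> (forall i, g (sym_lift n m A i) = Zs i) -> billiard_orbit g Zs.
Proof.
  intros dx dy hseq hZ; split; [exact hseq|].
  intros i x hx.
  rewrite <- hZ in hx; apply g_fiber in hx; destruct hx as [z hz].
  (* [x] lies on the grid [Z / (2n)], so [g] is symmetric about the mirror through [g x]. *)
  destruct (mirror_through_grid_point (A + 2 * Z.of_nat m * i + 2 * z * Z.of_nat n))
    as [th hth].
  assert (hmirror : forall y, g (2 * x - y) = line_reflection th (g y)).
  { intro y; rewrite <- hth; f_equal.
    rewrite !plus_IZR, !mult_IZR, <- !INR_IZR_INZ.
    replace x with (IZR z + sym_lift n m A i) by lra; unfold sym_lift.
    field; exact n_neq0. }
  assert (hfix : forall j, Zs (2 * i - j)%Z = line_reflection th (Zs j)).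
  { intro j; rewrite <- !hZ, <- hmirror; apply g_fiber; exists (- 2 * z)%Z.
    replace x with (IZR z + sym_lift n m A i) by lra; unfold sym_lift.
    rewrite mult_IZR, minus_IZR, mult_IZR; simpl; field; exact n_neq0. }
  replace (i + 1)%Z with (2 * i - (i - 1))%Z by ring.
  rewrite hfix.
  assert (hi : Zs i = line_reflection th (Zs i)).
  { rewrite <- hfix; f_equal; ring. }
  rewrite hi at 2; rewrite line_reflection_sub.
  apply reflection_law_of_mirror, (dgamma_mirror g th x dx dy hmirror).
Qed.

Hypothesis m_range : (1 <= m <= n - 1)%nat.

Lemma sym_lift_is_lift (A : Z) :
  is_lift g (fun i => g (sym_lift n m A i)) (sym_lift n m A).
Proof.
  intro i; split; [reflexivity|].
  replace (sym_lift n m A (i + 1)%Z - sym_lift n m A i) with (INR m / INR n)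
    by (unfold sym_lift; rewrite plus_IZR; ring).
  assert (1 <= INR m) by (apply (le_INR 1); lia).
  assert (INR m < INR n) by (apply lt_INR; lia).
  split; [apply Rdiv_lt_0_compat; lra|].
  apply (Rmult_lt_reg_r (INR n)); [lra|]; field_simplify; lra.
Qed.

Lemma sym_lift_nm_seq (A : Z) : nm_seq g n m (fun i => g (sym_lift n m A i)).
Proof.
  assert (hl := sym_lift_is_lift A).
  split; [split|split].
  - intro i; eexists; reflexivity.
  - intros i h; apply g_fiber in h.
    assert (e := is_int_small_eq0 _ h); specialize (hl i); lra.
  - intro i; apply g_fiber; exists (Z.of_nat m).
    unfold sym_lift; rewrite plus_IZR, <- !INR_IZR_INZ; field; exact n_neq0.
  - exists (sym_lift n m A); split; [exact hl|].
    apply (is_lim_seq_ext (fun k => (IZR A / (2 * INR n) + INR m / INR n * INR k) / INR k)).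
    + intro k; unfold sym_lift; rewrite <- INR_IZR_INZ; reflexivity.
    + apply is_lim_seq_affine_div.
Qed.

Lemma sym_lift_Birkhoff (A : Z) : Birkhoff g (fun i => g (sym_lift n m A i)).
Proof.
  exists (sym_lift n m A); split; [apply sym_lift_is_lift|].
  intros i j k l h; unfold sym_lift in *; rewrite !plus_IZR; lra.
Qed.

Hypothesis mn_coprime : Nat.gcd m n = 1%nat.

Lemma sym_lift_symmetric (A : Z) (Zs : Z -> pt) :
  (forall i, g (sym_lift n m A i) = Zs i) -> Dn_symmetric n Zs.
Proof.
  intro hZ.
  destruct (nat_coprime_bezout m n ltac:(lia) mn_coprime) as [u [v huv]].
  assert (hR : forall j, Defs.Rn n (Zs j) = Zs (j + u)%Z).
  { intro j; rewrite <- !hZ, <- g_rot; apply g_fiber; exists v.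
    rewrite <- (Z.mul_1_l u), (sym_lift_shift A 1 u v j huv), Z.mul_1_l.
    field; exact n_neq0. }
  assert (hS : forall j, Sref (Zs j) = Zs (- (A * u) - j)%Z).
  { intro j; rewrite <- !hZ, <- g_refl; apply g_fiber; exists (- (A * v))%Z.
    replace (- (A * u) - j)%Z with (- j + (- A) * u)%Z by ring.
    rewrite (sym_lift_shift A (- A) u v (- j) huv); unfold sym_lift.
    rewrite !mult_IZR, !opp_IZR, !mult_IZR; field; exact n_neq0. }
  intros f hf; induction hf as [|f hf [k [hk|hk]]|f hf [k [hk|hk]]].
  - exists 0%Z; left; reflexivity.
  - exists (k + u)%Z; left; intro i; rewrite hk, hR; f_equal; ring.
  - exists (k + u)%Z; right; intro i; rewrite hk, hR; f_equal; ring.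
  - exists (- (A * u) - k)%Z; right; intro i; rewrite hk, hS; f_equal; ring.
  - exists (- (A * u) - k)%Z; left; intro i; rewrite hk, hS; f_equal; ring.
Qed.

Lemma sym_lift_geom_equal_iff (A A' : Z) (Zs Zs' : Z -> pt) :
  (forall i, g (sym_lift n m A i) = Zs i) -> (forall i, g (sym_lift n m A' i) = Zs' i) ->
  (geom_equal Zs Zs' <->
   exists k : Z, forall i, sym_lift n m A i - sym_lift n m A' i = IZR k / INR n).
Proof.
  intros hZ hZ'; split.
  - intros [k hk].
    assert (h0 : exists j, g (sym_lift n m A 0%Z) = g (sym_lift n m A' j))
      by (destruct hk as [hk|hk]; eexists; rewrite hZ, hZ'; apply hk).
    destruct h0 as [j hj]; apply g_fiber in hj; destruct hj as [J hJ].
    exists (J * Z.of_nat n + j * Z.of_nat m)%Z; intro i.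
    rewrite sym_lift_diff, plus_IZR, !mult_IZR, <- !INR_IZR_INZ.
    rewrite <- (sym_lift_diff A A' 0%Z); unfold sym_lift in hJ |- *.
    apply (Rmult_eq_reg_r (INR n)); [|exact n_neq0].
    transitivity ((IZR J + INR m / INR n * IZR j) * INR n); [rewrite <- hJ|]; field; exact n_neq0.
  - intros [K hK].
    destruct (nat_coprime_bezout m n ltac:(lia) mn_coprime) as [u [v huv]].
    exists (K * u)%Z; left; intro i.
    rewrite <- hZ, <- hZ'; apply g_fiber; exists (K * v)%Z.
    rewrite Z.add_comm, (sym_lift_shift A' K u v i huv); specialize (hK i); lra.
Qed.

Lemma sym_lift_geom_equal_iff_even (A A' : Z) (Zs Zs' : Z -> pt) :
  (forall i, g (sym_lift n m A i) = Zs i) -> (forall i, g (sym_lift n m A' i) = Zs' i) ->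
  (geom_equal Zs Zs' <-> Z.Even (A - A')).
Proof.
  intros hZ hZ'; rewrite (sym_lift_geom_equal_iff A A' Zs Zs' hZ hZ').
  assert (hn2 : 2 * INR n <> 0) by (pose proof n_neq0; lra).
  split.
  - intros [k hk]; exists k; apply eq_IZR.
    specialize (hk 0%Z); rewrite sym_lift_diff in hk.
    rewrite minus_IZR, mult_IZR.
    apply (Rmult_eq_reg_r (/ (2 * INR n))); [|apply Rinv_neq_0_compat, hn2].
    transitivity ((IZR A - IZR A') / (2 * INR n)); [reflexivity|].
    rewrite hk; field; exact n_neq0.
  - intros [k hk]; exists k; intro i.
    rewrite sym_lift_diff, <- minus_IZR, hk, mult_IZR; field; exact n_neq0.
Qed.

End SymmetricCurve.

Theorem mainTheorem15 (n m : nat) (g : R -> pt) :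
  Nat.gcd m n = 1%nat ->
  (1 <= m <= n - 1)%nat ->
  Dn_billiard_curve n g ->
  (* symmetry <-> special lift *)
  (forall Zs, nm_seq g n m Zs ->
     (Dn_symmetric n Zs <-> exists A : Z, is_lift g Zs (sym_lift n m A))) /\
  (* every such sequence is a billiard orbit *)
  (forall Zs, nm_seq g n m Zs -> Dn_symmetric n Zs -> billiard_orbit g Zs) /\
  (* geometric equality <-> special lifts differ by an integer multiple of 1/n *)
  (forall Zs Zs' (A A' : Z),
     nm_seq g n m Zs -> Dn_symmetric n Zs -> billiard_orbit g Zs ->
     nm_seq g n m Zs' -> Dn_symmetric n Zs' -> billiard_orbit g Zs' ->
     is_lift g Zs (sym_lift n m A) -> is_lift g Zs' (sym_lift n m A') ->
     (geom_equal Zs Zs' <->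
      exists k : Z, forall i, sym_lift n m A i - sym_lift n m A' i = IZR k / INR n)) /\
  (* exactly two geometrically distinct such Birkhoff orbits *)
  (exists Z1 Z2 : Z -> pt,
     (nm_seq g n m Z1 /\ Dn_symmetric n Z1 /\ Birkhoff g Z1 /\ billiard_orbit g Z1) /\
     (nm_seq g n m Z2 /\ Dn_symmetric n Z2 /\ Birkhoff g Z2 /\ billiard_orbit g Z2) /\
     ~ geom_equal Z1 Z2 /\
     forall Zs, nm_seq g n m Zs -> Dn_symmetric n Zs -> Birkhoff g Zs ->
       billiard_orbit g Zs -> geom_equal Zs Z1 \/ geom_equal Zs Z2).
Proof.
  intros hgcd hm [[dx _] [[dy _] [_ [hfib [_ [hrot hrefl]]]]]].
  assert (hn : (2 <= n)%nat) by lia.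
  assert (to_sym := fun Zs => symmetric_has_sym_lift n g hn hfib hrot hrefl m Zs hm).
  assert (on_lift : forall Zs A, is_lift g Zs (sym_lift n m A) ->
            forall i, g (sym_lift n m A i) = Zs i) by (intros Zs A hA i; apply hA).
  assert (orbit : forall Zs A, billiard_seq g Zs -> is_lift g Zs (sym_lift n m A) ->
            billiard_orbit g Zs).
  { intros Zs A hseq hA.
    exact (sym_lift_billiard_orbit n g hn hfib hrot hrefl m A Zs dx dy hseq (on_lift _ _ hA)). }
  assert (even := sym_lift_geom_equal_iff_even n g hn hfib m hm hgcd).
  split; [|split; [|split]].
  - intros Zs [_ [hper hrn]]; split; [exact (to_sym Zs hper hrn)|].
    intros [A hA].
    exact (sym_lift_symmetric n g hn hfib hrot hrefl m hm hgcd A Zs (on_lift _ _ hA)).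
  - intros Zs [hseq [hper hrn]] hsym.
    destruct (to_sym Zs hper hrn hsym) as [A hA]; exact (orbit Zs A hseq hA).
  - intros Zs Zs' A A' _ _ _ _ _ _ hA hA'.
    exact (sym_lift_geom_equal_iff n g hn hfib m hm hgcd A A' Zs Zs'
             (on_lift _ _ hA) (on_lift _ _ hA')).
  - assert (good : forall A, let Zs := fun i => g (sym_lift n m A i) in
              nm_seq g n m Zs /\ Dn_symmetric n Zs /\ Birkhoff g Zs /\ billiard_orbit g Zs).
    { intros A Zs; assert (hseq := sym_lift_nm_seq n g hn hfib m hm A).
      split; [exact hseq | split; [|split]].
      - exact (sym_lift_symmetric n g hn hfib hrot hrefl m hm hgcd A Zs (fun i => eq_refl)).
      - exact (sym_lift_Birkhoff n g hn m hm A).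
      - exact (orbit Zs A (proj1 hseq) (sym_lift_is_lift n g hn m hm A)). }
    exists (fun i => g (sym_lift n m 0 i)), (fun i => g (sym_lift n m 1 i)).
    split; [exact (good 0%Z) | split; [exact (good 1%Z) | split]].
    + rewrite (even 0%Z 1%Z _ _ (fun i => eq_refl) (fun i => eq_refl)); intros [k hk]; lia.
    + intros Zs [_ [hper hrn]] hsym _ _.
      destruct (to_sym Zs hper hrn hsym) as [A hA].
      rewrite !(even A _ Zs _ (on_lift _ _ hA) (fun i => eq_refl)).
      destruct (Z.Even_or_Odd A) as [[t ht]|[t ht]]; [left | right]; exists t; lia.
Qed.
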